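(* Let $(X,d_X)$, $(Y,d_Y)$ be metric spaces with $Y$ separable, and let $\xi$ be a nonzero countable ordinal. A function $f: X\to Y$ is of Baire class $\xi$ if and only if it is the uniform limit of a sequence of $\mathbf{\Delta}^0_{\xi+1}$-functions from $X$ to $Y$.
   Context: Work in ZF plus countable choice over the reals. For metrizable $X,Y$: $f:X\to Y$ is of Baire class $1$ if $f^{-1}(U)\in\mathbf{\Sigma}^0_2(X)$ for every open $U\subseteq Y$; for $1<\xi<\omega_1$, $f$ is of Baire class $\xi$ if it is the pointwise limit of a sequence of functions $f_n:X\to Y$ where each $f_n$ is of Baire class $\xi_n$ for some $1\le\xi_n<\xi$. For a nonzero countable ordinal $\eta$, $f:X\to Y$ is a $\mathbf{\Delta}^0_\eta$-function if $f^{-1}(A)\in\mathbf{\Sigma}^0_\eta(X)$ for every $A\in\mathbf{\Sigma}^0_\eta(Y)$. *)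

From HB Require Import structures.
From mathcomp Require Import all_boot all_order all_algebra.
From mathcomp Require Import all_classical all_reals all_analysis.
Set Implicit Arguments. Unset Strict Implicit. Unset Printing Implicit Defensive.
Import Order.TTheory GRing.Theory Num.Theory.
Local Open Scope classical_set_scope.
Local Open Scope ring_scope.

(* Every countable ordinal is the value of some tree:
   |OZ| = 0, |OS t| = |t|+1, |OL f| = sup_n |f n|.              *)
Inductive cord : Type :=
| OZ : cord
| OS : cord -> cord
| OL : (nat -> cord) -> cord.

(* ole s t  <->  |s| <= |t|  (standard order on Brouwer trees) *)
Inductive ole : cord -> cord -> Prop :=
| ole_Z t : ole OZ t
| ole_SS s t : ole s t -> ole (OS s) (OS t)
| ole_cocone s (f : nat -> cord) k : ole s (f k) -> ole s (OL f)
| ole_limiting (f : nat -> cord) t : (forall k, ole (f k) t) -> ole (OL f) t.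

Definition olt (s t : cord) : Prop := ole (OS s) t.
Definition oeq (s t : cord) : Prop := ole s t /\ ole t s.

Definition oone : cord := OS OZ.

Inductive Sigma0 (T : topologicalType) : cord -> set T -> Prop :=
| Sigma0_open t (A : set T) : oeq t oone -> open A -> Sigma0 t A
| Sigma0_union t (A : set T) (B : nat -> set T) :
    olt oone t ->
    (forall n, exists s, ole oone s /\ olt s t /\ Sigma0 s (~` B n)) ->
    A = \bigcup_n B n -> Sigma0 t A.

Definition Delta0_fun (X Y : topologicalType) (eta : cord) (f : X -> Y) : Prop :=
  forall A : set Y, Sigma0 eta A -> Sigma0 eta (f @^-1` A).

Inductive BaireClass (X Y : topologicalType) : cord -> (X -> Y) -> Prop :=
| Baire_one t (f : X -> Y) : oeq t oone ->
    (forall U : set Y, open U -> Sigma0 (OS oone) (f @^-1` U)) -> BaireClass t f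
| Baire_lim t (f : X -> Y) (g : nat -> X -> Y) :
    olt oone t ->
    (forall n, exists s, ole oone s /\ olt s t /\ BaireClass s (g n)) ->
    (forall x, (fun n => g n x) @ \oo --> f x) -> BaireClass t f.

Definition separable_space (T : topologicalType) : Prop :=
  exists D : set T, countable D /\ dense D.

Definition unif_limit (R : realType) (X : Type) (Y : metricType R)
  (F : nat -> X -> Y) (f : X -> Y) : Prop :=
  forall e : R, 0 < e -> exists N : nat, forall n, (N <= n)%N ->
    forall x, mdist (f x) (F n x) < e.

From HB Require Import structures.
From mathcomp Require Import all_boot all_order all_algebra.
From mathcomp Require Import all_classical all_reals all_analysis.
From mathcomp Require Import lra.
Set Implicit Arguments. Unset Strict Implicit. Unset Printing Implicit Defensive.
Import Order.TTheory GRing.Theory Num.Theory.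
Local Open Scope classical_set_scope.
Local Open Scope ring_scope.

(* Both sides amount to f^-1(U) being Sigma^0_(xi+1) for every open U.  For a
   Baire class xi function this follows by induction on xi from
   f^-1(U) = ⋃_k ⋃_N ⋂_(n ≥ N) f_n^-1(inner U (1/(k+1))); for a uniform limit of
   Delta^0_(xi+1)-functions F_n from f^-1(U) = ⋃_k F_(N_k)^-1(W_k), where W_k is
   the open 1/(k+1)-neighbourhood of the 2/(k+1)-interior of U.

   Conversely, pulling back small balls around a dense sequence covers X by
   countably many Pi^0_xi sets P_q on each of which f stays close to a centre c_q;
   sending P_q \ ⋃_(j<q) P_j to c_q gives a Delta^0_(xi+1)-function close to f.
   For the Baire class (xi > 1), take such covers P_(k,q) at radius 2^-k and write
   P_(k,q) = ⋂_j C_(k,q,j) with C_(k,q,j) in Sigma^0_(<xi).  Truncating the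
   intersections at j <= n, the first q <= n whose truncated piece contains x
   eventually is the first true index, for each level k.  Following the levels as
   long as consecutive centres are 2^-k-consistent and keeping the deepest one
   gives functions g_n -> f, and g_n only depends on finitely many Sigma^0_s sets
   with s < xi, so it is of class s by induction. *)

Lemma ole_refl t : ole t t.
Proof.
elim: t => [|t IH|f IH]; [exact: ole_Z | exact: ole_SS |].
by apply: ole_limiting => k; apply: (ole_cocone (k := k)).
Qed.

Lemma oleS0F s : ~ ole (OS s) OZ.
Proof. by move=> H; inversion H. Qed.

Lemma oleSS_inv s t : ole (OS s) (OS t) -> ole s t.
Proof. by move=> H; inversion H. Qed.

Lemma oleSL_inv s f : ole (OS s) (OL f) -> exists k, ole (OS s) (f k).
Proof. by move=> H; inversion H; exists k. Qed.

Lemma oleL_inv f t : ole (OL f) t -> forall k, ole (f k) t.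
Proof.
move=> H; remember (OL f) as a eqn:Ea.
elim: H f Ea => // [s g k _ IH f Ea j | g u H _ f [<-] //].
by apply: (ole_cocone (k := k)); apply: IH.
Qed.

Lemma ole_trans a b c : ole a b -> ole b c -> ole a c.
Proof.
move=> H; elim: H c => [t c | s t _ IH c | s f k _ IH c | f t _ IH c] Hc.
- exact: ole_Z.
- elim: c Hc => [/oleS0F [] | c _ /oleSS_inv Hc | g IHg /oleSL_inv [k Hk]].
    exact/ole_SS/IH.
  exact: (ole_cocone (k := k) (IHg k Hk)).
- exact: IH (oleL_inv Hc k).
- by apply: ole_limiting => k; apply: IH.
Qed.

Lemma oleSn t : ole t (OS t).
Proof.
elim: t => [|t IH|f IH]; [exact: ole_Z | exact: ole_SS |].
apply: ole_limiting => k; apply: ole_trans (IH k) _.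
exact/ole_SS/(ole_cocone (k := k) (ole_refl _)).
Qed.

Lemma oltW s t : olt s t -> ole s t.
Proof. exact: ole_trans (oleSn s). Qed.

Lemma olt_le_trans a b c : olt a b -> ole b c -> olt a c.
Proof. exact: ole_trans. Qed.

Lemma ole_lt_trans a b c : ole a b -> olt b c -> olt a c.
Proof. by move/ole_SS; apply: ole_trans. Qed.

Lemma ole_or_gt s t : ole s t \/ olt t s.
Proof.
elim: s t => [|s IHs|h IHh] t; first by left; apply: ole_Z.
- elim: t => [|t _|f IHf].
  + by right; apply/ole_SS/ole_Z.
  + by case: (IHs t) => H; [left | right]; apply: ole_SS.
  + have [[k Hk]|Hn] := pselect (exists k, ole (OS s) (f k)).
      by left; apply: (ole_cocone (k := k)).
    right; apply/ole_SS/ole_limiting => k.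
    have [Hk|] := IHf k; first by exfalso; apply: Hn; exists k.
    exact: oleSS_inv.
- have [H|/existsNP [k Hk]] := pselect (forall k, ole (h k) t).
    by left; apply: ole_limiting.
  right; have [//|H] := IHh k t.
  exact: (ole_cocone (k := k)).
Qed.

Lemma oltxx t : ~ olt t t.
Proof.
elim: t => [|t IH|f IH] H; [exact: oleS0F H | exact/IH/oleSS_inv |].
have [k Hk] := oleSL_inv H; apply: (IH k); apply: ole_trans Hk.
exact/ole_SS/(ole_cocone (k := k) (ole_refl _)).
Qed.

Lemma olt_geF s t : olt s t -> ole t s -> False.
Proof. by move=> st ts; apply: (@oltxx s); apply: olt_le_trans ts. Qed.

Lemma ge1_cases t : ole oone t -> oeq t oone \/ olt oone t.
Proof. by move=> H; case: (ole_or_gt t oone) => H2; [left | right]. Qed.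

Lemma olt_wf : well_founded olt.
Proof.
suff Acc_below t s : olt s t -> Acc olt s by move=> t; constructor => s; apply: Acc_below.
elim: t s => [|t IH|f IH] s H.
- by case: (oleS0F H).
- by constructor => u Hu; apply: IH; apply: olt_le_trans Hu (oleSS_inv H).
- by have [k Hk] := oleSL_inv H; apply: IH Hk.
Qed.

Lemma olt_ub2 a b t : ole oone a -> olt a t -> ole oone b -> olt b t ->
  exists c, [/\ ole oone c, olt c t, ole a c & ole b c].
Proof.
move=> a1 at_ b1 bt; case: (ole_or_gt a b) => ab.
  by exists b; split=> //; apply: ole_refl.
by exists a; split=> //; [apply: ole_refl | apply: oltW].
Qed.

Lemma olt_ub_seq (I : eqType) (s : seq I) (a : I -> cord) t : olt oone t ->
  (forall i, i \in s -> ole oone (a i) /\ olt (a i) t) ->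
  exists c, [/\ ole oone c, olt c t & forall i, i \in s -> ole (a i) c].
Proof.
move=> t1; elim: s => [|i s IH] Hs; first by exists oone; split => //; apply: ole_refl.
have [c [c1 ct sc]] := IH (fun j js => Hs j (mem_behead (s := i :: s) js)).
have [ai1 ait] := Hs i (mem_head i s).
have [d [d1 dt ad cd]] := olt_ub2 ai1 ait c1 ct.
exists d; split => // j; rewrite inE => /orP [/eqP -> // | js].
exact: ole_trans (sc j js) cd.
Qed.

Lemma olt_ub_fin (I : finType) (a : I -> cord) t : olt oone t ->
  (forall i, ole oone (a i) /\ olt (a i) t) ->
  exists c, [/\ ole oone c, olt c t & forall i, ole (a i) c].
Proof.
move=> t1 Ha; have [c [c1 ct ac]] := olt_ub_seq (s := enum I) t1 (fun i _ => Ha i).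
by exists c; split => // i; apply: ac; rewrite mem_enum.
Qed.

Lemma invSn_lt {R : realType} (e : R) : 0 < e -> exists k : nat, k.+1%:R^-1 < e.
Proof. by move=> e0; have [k] := ltr_add_invr e0; rewrite add0r; exists k. Qed.

Section metric_sets.
Context {R : realType} {T : metricType R}.

Lemma open_mdistP (A : set T) :
  open A <-> forall x, A x -> exists2 e : R, 0 < e & forall y, mdist x y < e -> A y.
Proof.
rewrite openE; split => [oA x /oA | oA x /oA [e e0 He]]; rewrite /interior.
  by move=> /nbhs_ballP [e e0 He]; exists e => // y xy; apply: He; rewrite ballEmdist.
by apply/nbhs_ballP; exists e => // y; rewrite ballEmdist; apply: He.
Qed.

Lemma open_mball (y : T) (r : R) : open [set z | mdist y z < r].
Proof.
apply/open_mdistP => z /= yz; exists (r - mdist y z); first by rewrite subr_gt0.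
move=> z' zz'; rewrite (le_lt_trans (metric_triangle y z z')) //.
by rewrite addrC -ltrBrDr.
Qed.

Definition inner (A : set T) (r : R) : set T :=
  [set y | forall z, mdist y z < r -> A z].

Lemma open_setC_inner A r : open (~` inner A r).
Proof.
have -> : ~` inner A r = \bigcup_(z in ~` A) [set y | mdist z y < r].
  apply/seteqP; split => [y /existsNP [z /not_implyP [yz nAz]] | y [z nAz zy] Hy].
    by exists z; rewrite //= metric_sym.
  by apply/nAz/Hy; rewrite metric_sym.
by apply: bigcup_open => z _; apply: open_mball.
Qed.

Lemma open_bigcup_inner A : open A -> A = \bigcup_k inner A k.+1%:R^-1.
Proof.
move=> /open_mdistP oA; apply/seteqP; split => [x Ax | x [k _ Hk]].
  have [e e0 He] := oA x Ax; have [k ke] := invSn_lt e0.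
  by exists k => // z xz; apply/He/(lt_trans xz).
by apply: Hk; rewrite mdistxx invr_gt0 ltr0n.
Qed.

End metric_sets.

Definition Pi0 (T : topologicalType) t (A : set T) := Sigma0 t (~` A).

Definition Delta0 (T : topologicalType) t (A : set T) := Sigma0 t A /\ Pi0 t A.

Section Sigma0_closure.
Context {R : realType} {T : metricType R}.
Implicit Types (A B : set T) (s t : cord).

Lemma Sigma0_gt1_bigcup t A : olt oone t -> Sigma0 t A ->
  exists B : nat -> set T, A = \bigcup_n B n /\
    forall n, exists s, [/\ ole oone s, olt s t & Pi0 s (B n)].
Proof.
move=> + HA; case: HA => [t' A' [t'1 _] _ t1 | t' A' B _ HB -> _].
  by case: (olt_geF t1 t'1).
by exists B; split => // n; have [s [? [? ?]]] := HB n; exists s.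
Qed.

Lemma Pi0_gt1_bigcap t A : olt oone t -> Pi0 t A ->
  exists (C : nat -> set T) (s : nat -> cord), A = \bigcap_j C j /\
    forall j, [/\ ole oone (s j), olt (s j) t & Sigma0 (s j) (C j)].
Proof.
move=> t1 /(Sigma0_gt1_bigcup t1) [B [AB /choice [s Hs]]].
exists (fun j => ~` B j), s; split; first by rewrite -setC_bigcup -AB setCK.
by move=> j; have [? ? ?] := Hs j.
Qed.

Lemma Sigma0_le1_open t A : ole t oone -> Sigma0 t A -> open A.
Proof. by move=> + HA; case: HA => // t' A' B t'1 _ _ t1; case: (olt_geF t'1 t1). Qed.

(* In a metric space an open set is a countable union of closed sets. *)
Lemma open_Sigma0 t A : ole oone t -> open A -> Sigma0 t A.
Proof.
move=> t1 oA; case: (ge1_cases t1) => [|t_gt1]; first by move/Sigma0_open; apply.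
apply: (Sigma0_union (B := fun k => inner A k.+1%:R^-1)) => //.
  move=> n; exists oone; split; first exact: ole_refl; split => //.
  by apply: Sigma0_open; [split; apply: ole_refl | apply: open_setC_inner].
exact: open_bigcup_inner.
Qed.

Lemma Sigma0_set0 t : ole oone t -> Sigma0 t (set0 : set T).
Proof. by move=> t1; apply: open_Sigma0 t1 open0. Qed.

Lemma Sigma0_setT t : ole oone t -> Sigma0 t (setT : set T).
Proof. by move=> t1; apply: open_Sigma0 t1 openT. Qed.

Lemma Sigma0_le s t A : ole oone s -> ole s t -> Sigma0 s A -> Sigma0 t A.
Proof.
move=> s1 st HA; case: HA s1 st => [s' A' _ oA s1 st | s' A' B s'1 HB -> s1 st].
  exact: open_Sigma0 (ole_trans s1 st) oA.
apply: (Sigma0_union (B := B)) => [|n|//]; first exact: olt_le_trans s'1 st.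
have [r [r1 [rs HBn]]] := HB n.
by exists r; split => //; split => //; apply: olt_le_trans st.
Qed.

Lemma Pi0_Sigma0_lt s t A : ole oone s -> olt s t -> Pi0 s A -> Sigma0 t A.
Proof.
move=> s1 st HA; apply: (Sigma0_union (B := fun _ => A)).
- exact: ole_lt_trans st.
- by move=> n; exists s.
- by apply/seteqP; split => [x Ax | x [_ _ Ax]] //; exists 0%N.
Qed.

Lemma Sigma0_Pi0_lt s t A : ole oone s -> olt s t -> Sigma0 s A -> Pi0 t A.
Proof. by move=> s1 st HA; apply: Pi0_Sigma0_lt s1 st _; rewrite /Pi0 setCK. Qed.

Lemma Sigma0_bigcup t (A : nat -> set T) : ole oone t ->
  (forall n, Sigma0 t (A n)) -> Sigma0 t (\bigcup_n A n).
Proof.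
move=> t1 HA; case: (ge1_cases t1) => [[t_le1 _] | t_gt1].
  apply: open_Sigma0 t1 _; apply: bigcup_open => n _.
  exact: Sigma0_le1_open t_le1 (HA n).
have /choice [B HB] := fun n => Sigma0_gt1_bigcup t_gt1 (HA n).
pose C q := if unpickle q is Some (n, m) then B n m else set0.
apply: (Sigma0_union (B := C)) => // [q|].
  rewrite /C; case: (unpickle q) => [[n m]|].
    by have [s [? ? ?]] := (HB n).2 m; exists s.
  exists oone; split; first exact: ole_refl.
  by split => //; rewrite setC0; apply/Sigma0_setT/ole_refl.
apply/seteqP; split => [x [n _] | x [q _]].
  by rewrite (HB n).1 => -[m _ Hm]; exists (pickle (n, m)); rewrite /C ?pickleK.
rewrite /C; case: (unpickle q) => [[n m]|] // Hx.
by exists n => //; rewrite (HB n).1; exists m.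
Qed.

Lemma Sigma0_setU t A B : ole oone t -> Sigma0 t A -> Sigma0 t B -> Sigma0 t (A `|` B).
Proof.
move=> t1 HA HB; have -> : A `|` B = \bigcup_n (if n is 0%N then A else B).
  apply/seteqP; split => [x [Ax|Bx] | x [[|n] _ Hx]];
    by [exists 0%N | exists 1%N | left | right].
by apply: Sigma0_bigcup t1 _ => -[|n].
Qed.

Lemma Sigma0_setI t A B : ole oone t -> Sigma0 t A -> Sigma0 t B -> Sigma0 t (A `&` B).
Proof.
move=> t1 HA HB; case: (ge1_cases t1) => [[t_le1 _] | t_gt1].
  by apply: open_Sigma0 t1 _; apply: openI; apply: Sigma0_le1_open t_le1 _.
have [C [-> HC]] := Sigma0_gt1_bigcup t_gt1 HA.
have [D [-> HD]] := Sigma0_gt1_bigcup t_gt1 HB.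
rewrite setI_bigcupl; apply: (Sigma0_bigcup t1) => n.
rewrite setI_bigcupr; apply: (Sigma0_bigcup t1) => m.
have [a [a1 at_ Ca]] := HC n; have [b [b1 bt Db]] := HD m.
have [c [c1 ct ac bc]] := olt_ub2 a1 at_ b1 bt.
apply: (Pi0_Sigma0_lt c1 ct); rewrite /Pi0 setCI.
by apply: (Sigma0_setU c1); [apply: Sigma0_le a1 ac Ca | apply: Sigma0_le b1 bc Db].
Qed.

Lemma Sigma0_bigcap_lt t (A : nat -> set T) n : ole oone t ->
  (forall j, (j < n)%N -> Sigma0 t (A j)) -> Sigma0 t [set x | forall j, (j < n)%N -> A j x].
Proof.
move=> t1; elim: n => [|n IH] HA.
  have -> : [set x | forall j, (j < 0)%N -> A j x] = setT by rewrite -subTset => x.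
  exact: Sigma0_setT.
have -> : [set x | forall j, (j < n.+1)%N -> A j x] =
    [set x | forall j, (j < n)%N -> A j x] `&` A n.
  apply/seteqP; split => [x Hx | x [Hx An] j].
    by split => [j jn|]; apply: Hx; rewrite // ltnS ltnW.
  by rewrite ltnS leq_eqVlt => /orP [/eqP -> | /Hx].
by apply: (Sigma0_setI t1); [apply: IH => j jn; apply: HA; rewrite ltnS ltnW | apply: HA].
Qed.

End Sigma0_closure.

Section Delta0_algebra.
Context {R : realType} {T : metricType R}.
Implicit Types (A B W : set T) (t : cord).

Lemma Delta0_setC t A : Delta0 t A -> Delta0 t (~` A).
Proof. by move=> [HA HCA]; split; rewrite /Pi0 ?setCK. Qed.

Lemma Delta0_setI t A B : ole oone t -> Delta0 t A -> Delta0 t B -> Delta0 t (A `&` B).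
Proof.
move=> t1 [HA HCA] [HB HCB]; split; first exact: Sigma0_setI.
by rewrite /Pi0 setCI; apply: Sigma0_setU.
Qed.

Lemma Delta0_setU t A B : ole oone t -> Delta0 t A -> Delta0 t B -> Delta0 t (A `|` B).
Proof.
move=> t1 /Delta0_setC HA /Delta0_setC HB.
by rewrite -[_ `|` _]setCK setCU; apply/Delta0_setC/Delta0_setI.
Qed.

Definition agree_on (I : eqType) (s : seq I) (A : I -> set T) x x' :=
  forall i, i \in s -> (A i x <-> A i x').

Lemma Delta0_agree_on (I : eqType) (s : seq I) (A : I -> set T) t W : ole oone t ->
  (forall i, i \in s -> Delta0 t (A i)) ->
  (forall x x', agree_on s A x x' -> W x -> W x') -> Delta0 t W.
Proof.
move=> t1; elim: s W => [|i s IH] W HA HW.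
  have [[x Wx]|W0] := pselect (exists x, W x).
    have -> : W = setT by rewrite -subTset => x' _; apply: HW Wx.
    by split; [apply: Sigma0_setT | rewrite /Pi0 setCT; apply: Sigma0_set0].
  have -> : W = set0 by rewrite -subset0 => x Wx; apply: W0; exists x.
  by split; [apply: Sigma0_set0 | rewrite /Pi0 setC0; apply: Sigma0_setT].
pose W_ (b : Prop) := [set x | exists2 x', [/\ A i x' <-> b & W x'] & agree_on s A x x'].
have W_agree b : forall x x', agree_on s A x x' -> W_ b x -> W_ b x'.
  move=> x x' xx' [z zb xz]; exists z => // j js.
  by split => H; [apply/(xz j js)/(xx' j js) | apply/(xx' j js)/(xz j js)].
have -> : W = (A i `&` W_ True) `|` (~` A i `&` W_ False).
  apply/seteqP; split => [x Wx | x [] [Aix [z [zb Wz] xz]]].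
  - have [Aix|nAix] := pselect (A i x); [left | right]; split => //;
      by exists x; split.
  - apply: HW Wz => j; rewrite inE => /orP [/eqP -> | js].
      by split => _; [ | apply: zb.2].
    by split => H; apply/(xz j js).
  - apply: HW Wz => j; rewrite inE => /orP [/eqP -> | js].
      by split => H; [case: (zb.1 H) | case: Aix].
    by split => H; apply/(xz j js).
have HA' j : j \in s -> Delta0 t (A j) by move=> js; apply/HA/mem_behead.
have HAi := HA i (mem_head i s).
by apply: (Delta0_setU t1); apply: (Delta0_setI t1);
  [ | apply: IH HA' (W_agree _) | apply: Delta0_setC | apply: IH HA' (W_agree _)].
Qed.

End Delta0_algebra.

Definition Sigma0_measurable (X Y : topologicalType) t (f : X -> Y) :=
  forall U, open U -> Sigma0 t (f @^-1` U).

Lemma BaireClass_ge1 (X Y : topologicalType) t (f : X -> Y) :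
  BaireClass t f -> ole oone t.
Proof. by case => [t' f' [_ //] | t' f' g /oltW]. Qed.

Section Baire_measurable.
Context {R : realType} {X Y : metricType R}.
Implicit Types (f : X -> Y) (g : nat -> X -> Y).

Lemma preimage_open_cvg f g U : open U -> (forall x, g^~ x @ \oo --> f x) ->
  f @^-1` U = \bigcup_k \bigcup_N \bigcap_n
    (if (N <= n)%N then g n @^-1` inner U k.+1%:R^-1 else setT).
Proof.
move=> /open_mdistP oU gf; have invSn_gt0 k : 0 < k.+1%:R^-1 :> R by [].
apply/seteqP; split => [x /= Ux | x [k _ [N _ Hx]] /=].
  have [e e0 He] := oU _ Ux; have [k ke] := invSn_lt (divr_gt0 e0 (ltr0n R 2)).
  have [N _ HN] := metricType_numDomainType.cvgr_dist_lt (gf x) (invSn_gt0 k).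
  exists k => //; exists N => // n _; case: ifP => // Nn z gz; apply: He.
  rewrite (le_lt_trans (metric_triangle _ (g n x) _)) // [e]splitr.
  by rewrite ltrD // (lt_trans _ ke) //; apply: HN.
have [M _ HM] := metricType_numDomainType.cvgr_dist_lt (gf x) (invSn_gt0 k).
have := Hx (maxn N M) I; rewrite leq_maxl; apply.
by rewrite metric_sym; apply: HM; rewrite /= leq_maxr.
Qed.

Lemma Sigma0_measurable_cvg t f g : ole oone t ->
  (forall n, exists s, [/\ ole oone s, olt s t & Sigma0_measurable (OS s) (g n)]) ->
  (forall x, g^~ x @ \oo --> f x) -> Sigma0_measurable (OS t) f.
Proof.
move=> t1 Hg gf U oU; rewrite (preimage_open_cvg oU gf).
have St1 : ole oone (OS t) by apply: ole_trans t1 (oleSn t).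
apply: (Sigma0_bigcup St1) => k; apply: (Sigma0_bigcup St1) => N.
apply: (Pi0_Sigma0_lt t1 (ole_refl _)).
rewrite /Pi0 setC_bigcap; apply: (Sigma0_bigcup t1) => n.
case: ifP => _; last by rewrite setCT; apply: Sigma0_set0.
have [s [s1 st Hgn]] := Hg n.
rewrite preimage_setC; apply: (Sigma0_le _ st); first exact: ole_trans s1 (oleSn s).
exact/Hgn/open_setC_inner.
Qed.

Lemma BaireClass_measurable t f : BaireClass t f -> Sigma0_measurable (OS t) f.
Proof.
elim/(well_founded_induction olt_wf): t f => t IH f Hb.
case: Hb IH => [{}t {}f [_ t1] Hf _ | {}t {}f g t1 Hg gf IH].
  by move=> U /Hf; apply: Sigma0_le (oleSn _) (ole_SS t1).
apply: (Sigma0_measurable_cvg (oltW t1) _ gf) => n.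
have [s [s1 [st Hgn]]] := Hg n.
by exists s; split => //; apply: IH.
Qed.

End Baire_measurable.

Section separable.
Context {R : realType} {Y : metricType R}.

Definition dense_seq (e : nat -> Y) := forall y (r : R), 0 < r -> exists i, mdist y (e i) < r.

Lemma separable_dense_seq (y0 : Y) : separable_space Y -> exists e, dense_seq e.
Proof.
move=> [D [/countable_injP [h hinj] dD]].
have /choice [e He] n : exists y, D y /\ h y = n \/ ~ (exists y, D y /\ h y = n).
  have [[y Hy]|Hn] := pselect (exists y, D y /\ h y = n).
    by exists y; left.
  by exists y0; right.
exists e => y r r0.
have [z [yz Dz]] : [set z | mdist y z < r] `&` D !=set0.
  by apply: dD; [exists y; rewrite /= mdistxx | apply: open_mball].
exists (h z); case: (He (h z)) => [[De hez] | []]; last by exists z.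
by rewrite (hinj _ _ _ _ hez) ?inE.
Qed.

End separable.

Section Delta0_approximation.
Context {R : realType} {X Y : metricType R}.
Implicit Types (f : X -> Y) (e : nat -> Y).

Lemma Pi0_cover t f e (r : R) : ole oone t -> 0 < r -> dense_seq e ->
  Sigma0_measurable (OS t) f ->
  exists (P : nat -> set X) (c : nat -> Y), [/\ forall q, Pi0 t (P q),
    forall q x, P q x -> mdist (c q) (f x) < r & forall x, exists q, P q x].
Proof.
move=> t1 r0 e_dense Hf.
have St1 : olt oone (OS t) by apply: ole_SS.
have /choice [B HB] i := Sigma0_gt1_bigcup St1 (Hf _ (open_mball (e i) r)).
exists (fun q => if unpickle q : option (nat * nat) is Some (i, m) then B i m else set0).
exists (fun q => e (if unpickle q : option (nat * nat) is Some (i, _) then i else 0%N)).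
split.
- move=> q; case: (unpickle q) => [[i m]|]; last by rewrite /Pi0 setC0; apply: Sigma0_setT.
  by have [s [s1 st HBs]] := (HB i).2 m; apply: Sigma0_le s1 (oleSS_inv st) HBs.
- move=> q x; case: (unpickle q) => [[i m]|] // Bx.
  by have : (f @^-1` [set z | mdist (e i) z < r]) x by rewrite (HB i).1; exists m.
- move=> x; have [i fxei] := e_dense (f x) r r0.
  have : (f @^-1` [set z | mdist (e i) z < r]) x by rewrite /= metric_sym.
  by rewrite (HB i).1 => -[m _ Bx]; exists (pickle (i, m)); rewrite pickleK.
Qed.

(* Send x to the centre attached to the first piece of the cover containing x. *)
Lemma Delta0_fun_approx t f e (r : R) : ole oone t -> 0 < r -> dense_seq e ->
  Sigma0_measurable (OS t) f ->
  exists F : X -> Y, Delta0_fun (OS t) F /\ forall x, mdist (f x) (F x) < r.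
Proof.
move=> t1 r0 e_dense Hf.
have [P [c [PPi Pc Pcov]]] := Pi0_cover t1 r0 e_dense Hf.
have covb x : exists q, `[< P q x >] by have [q Pq] := Pcov x; exists q; apply/asboolP.
exists (fun x => c (ex_minn (covb x))); split; last first.
  by move=> x; rewrite metric_sym; case: ex_minnP => q /asboolP /Pc.
have St1 : ole oone (OS t) by apply: ole_trans t1 (oleSn t).
pose L q := P q `&` [set x | forall j, (j < q)%N -> ~ P j x].
move=> A _; have -> : (fun x => c (ex_minn (covb x))) @^-1` A =
    \bigcup_q (if `[< A (c q) >] then L q else set0).
  apply/seteqP; split => [x /= | x [q _] /=].
    case: ex_minnP => q /asboolP Pq qmin Acq; exists q => //.
    rewrite asboolT //; split => // j jq Pj.
    by have := qmin j (asboolT Pj); rewrite leqNgt jq.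
  case: ifPn => [/asboolP Acq [Pq Pmin] | //].
  case: ex_minnP => q' /asboolP Pq' qmin; suff -> : q' = q by [].
  apply/eqP; rewrite eqn_leq qmin ?asboolT //=.
  by rewrite leqNgt; apply/negP => /Pmin.
apply: (Sigma0_bigcup St1) => q; case: ifP => _; last exact: Sigma0_set0.
apply: (Sigma0_setI St1); first exact: (Pi0_Sigma0_lt t1 (ole_refl _)).
by apply: (Sigma0_bigcap_lt St1) => j _; apply: Sigma0_le t1 (oleSn t) (PPi j).
Qed.

Lemma BaireClass_unif_Delta0 t f e : dense_seq e -> BaireClass t f ->
  exists F : nat -> X -> Y, (forall n, Delta0_fun (OS t) (F n)) /\ unif_limit F f.
Proof.
move=> e_dense Hb; have t1 := BaireClass_ge1 Hb.
have /choice [F HF] n : exists F : X -> Y,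
    Delta0_fun (OS t) F /\ forall x, mdist (f x) (F x) < n.+1%:R^-1.
  exact: Delta0_fun_approx t1 _ e_dense (BaireClass_measurable Hb).
exists F; split => [n | r r0]; first exact: (HF n).1.
have [N Nr] := invSn_lt r0; exists N => n Nn x.
apply: lt_le_trans ((HF n).2 x) (le_trans _ (ltW Nr)).
by rewrite lef_pV2 ?posrE ?ler_nat.
Qed.

Lemma unif_limit_Sigma0_measurable t (F : nat -> X -> Y) f : ole oone t ->
  (forall n, Delta0_fun (OS t) (F n)) -> unif_limit F f -> Sigma0_measurable (OS t) f.
Proof.
move=> t1 FD Ff U oU; pose r k : R := k.+1%:R^-1.
have r_gt0 k : 0 < r k by rewrite invr_gt0.
have /choice [N HN] k := Ff _ (r_gt0 k).
pose W k := \bigcup_(y in inner U (2 * r k)) [set z | mdist y z < r k].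
have -> : f @^-1` U = \bigcup_k (F (N k) @^-1` W k).
  apply/seteqP; split => [x /= Ux | x [k _ [y Uy yF]] /=].
    have [e e0 He] := (open_mdistP U).1 oU _ Ux.
    have [k ke] := invSn_lt (divr_gt0 e0 (ltr0n R 2)).
    exists k => //; exists (f x); last exact: HN.
    by move=> z fxz; apply/He/(lt_trans fxz); rewrite mulrC -ltr_pdivlMr.
  apply: Uy; rewrite (le_lt_trans (metric_triangle _ (F (N k) x) _)) //.
  by rewrite mulr2n mulrDl !mul1r ltrD // metric_sym HN.
have St1 : ole oone (OS t) by apply: ole_trans t1 (oleSn t).
apply: (Sigma0_bigcup St1) => k; apply: FD; apply: (open_Sigma0 St1).
by apply: bigcup_open => y _; apply: open_mball.
Qed.

End Delta0_approximation.

Section find_iota.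
Variable p : pred nat.

Lemma find_iota_gt n j : (j < find p (iota 0 n))%N -> ~~ p j.
Proof.
move=> jf; have jn : (j < n)%N by rewrite (leq_trans jf) // -{2}(size_iota 0 n) find_size.
by have := before_find 0 jf; rewrite nth_iota // add0n => ->.
Qed.

Lemma find_iota_ge n K : (K <= n)%N -> (forall k, (k < K)%N -> ~~ p k) ->
  (K <= find p (iota 0 n))%N.
Proof.
move=> Kn pK; rewrite leqNgt; apply/negP => fK.
have hasp : has p (iota 0 n) by rewrite has_find size_iota (leq_trans fK).
have := nth_find 0 hasp; rewrite nth_iota ?add0n; last by rewrite (leq_trans fK).
by apply/negP/pK.
Qed.

Lemma find_iota_least n q : (q <= n)%N -> p q -> (forall j, (j < q)%N -> ~~ p j) ->
  find p (iota 0 n.+1) = q.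
Proof.
move=> qn pq pj; apply/eqP; rewrite eqn_leq (@find_iota_ge n.+1 q) ?andbT //.
  by rewrite leqNgt; apply/negP => /find_iota_gt; rewrite pq.
exact: leq_trans qn _.
Qed.

End find_iota.

Lemma find_iota_eventually (P : nat -> Prop) (p : nat -> pred nat) :
  (exists q, P q) -> (forall n q, P q -> p n q) ->
  (forall q, ~ P q -> \forall n \near \oo, ~~ p n q) ->
  exists2 q, P q & \forall n \near \oo, find (p n) (iota 0 n.+1) = q.
Proof.
move=> exP Pp notPp.
have exPb : exists q, `[< P q >] by have [q Pq] := exP; exists q; apply/asboolP.
case: (ex_minnP exPb) => q /asboolP Pq qmin; exists q => //.
have notp_below : \forall n \near \oo, forall j : 'I_q, ~~ p n j.
  apply: filter_forall => j; apply: notPp => Pj.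
  by have := qmin j (asboolT Pj); rewrite leqNgt ltn_ord.
near=> n; apply: find_iota_least => [||j jq]; [|exact: Pp|].
  by near: n; apply: nbhs_infty_ge.
exact: (near notp_below n _ (Ordinal jq)).
Unshelve. all: by end_near.
Qed.

Section dyadic.
Context {R : realType}.

Lemma dyadic_gt0 k : 0 < 2 ^- k :> R.
Proof. by rewrite invr_gt0 exprn_gt0. Qed.

Lemma dyadicS k : 2 ^- k.+1 = 2 ^- k / 2 :> R.
Proof. by rewrite exprSr invfM. Qed.

Lemma dyadic_small (e : R) : 0 < e -> exists K, 5 * 2 ^- K < e.
Proof.
move=> e0; have [K Ke] := invSn_lt (divr_gt0 e0 (ltr0n R 5)); exists K.
rewrite mulrC -ltr_pdivlMr //; apply: le_lt_trans Ke.
by rewrite lef_pV2 ?posrE ?exprn_gt0 // -natrX ler_nat ltn_expl.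
Qed.

End dyadic.

Section consistent_depth.
Context {R : realType} {Y : metricType R}.

Lemma mdist_telescope (u : nat -> Y) (r : nat -> R) K D : (K <= D)%N ->
  (forall j, (K <= j < D)%N -> mdist (u j) (u j.+1) <= r j - r j.+1) ->
  mdist (u K) (u D) <= r K - r D.
Proof.
elim: D => [|D IH]; first by rewrite leqn0 => /eqP -> _; rewrite mdistxx subrr.
rewrite leq_eqVlt => /orP [/eqP -> _ | KD uD]; first by rewrite mdistxx subrr.
have uKD : mdist (u K) (u D) <= r K - r D.
  by apply: IH => // j /andP [Kj jD]; apply: uD; rewrite Kj ltnW.
apply: le_trans (metric_triangle _ (u D) _) _.
rewrite -(subrKA (r D) (r K)); apply: lerD uKD _.
by apply: uD; rewrite ltnSn andbT -ltnS.
Qed.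

Definition consistent_depth (u : nat -> Y) n :=
  find (fun k => ~~ (mdist (u k) (u k.+1) < 2 ^- k + 2 ^- k.+1)) (iota 0 n).

Lemma cvg_consistent_depth (u : nat -> nat -> Y) (z : Y) :
  (forall k, \forall n \near \oo, mdist z (u n k) < 2 ^- k) ->
  (fun n => u n (consistent_depth (u n) n)) @ \oo --> z.
Proof.
move=> uz; apply/metricType_numDomainType.cvgrPdist_lt => eps eps0.
have [K Keps] := dyadic_small eps0.
have uKz : \forall n \near \oo, forall k : 'I_K.+2, mdist z (u n k) < 2 ^- k.
  exact: filter_forall.
near=> n; set D := consistent_depth _ _.
have uz_upto k : (k < K.+2)%N -> mdist z (u n k) < 2 ^- k.
  by move=> kK; exact: (near uKz n _ (Ordinal kK)).
have KD : (K <= D)%N.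
  apply: find_iota_ge => [|k kK]; first by near: n; apply: nbhs_infty_ge.
  rewrite negbK (le_lt_trans (metric_triangle _ z _)) // metric_sym.
  by rewrite ltrD ?uz_upto // ltnS ltnW // ltnW.
have uKD : mdist (u n K) (u n D) <= 4 * 2 ^- K - 4 * 2 ^- D.
  apply: (@mdist_telescope (u n) (fun j => 4 * 2 ^- j) K D KD) => j /andP [_ jD].
  have := find_iota_gt jD; rewrite negbK => /ltW /le_trans; apply.
  by rewrite dyadicS; have := @dyadic_gt0 R j; lra.
apply: le_lt_trans (metric_triangle _ (u n K) _) _.
have := @dyadic_gt0 R D; have := uz_upto K (leqnSn K.+1); lra.
Unshelve. all: by end_near.
Qed.

End consistent_depth.

Lemma Sigma0_measurable_finite_factor {R : realType} (X Y : metricType R)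
    (I : finType) (A : I -> set X) s (h : X -> Y) : ole oone s ->
  (forall i, Sigma0 s (A i)) ->
  (forall x x', (forall i, A i x <-> A i x') -> h x = h x') ->
  Sigma0_measurable (OS s) h.
Proof.
move=> s1 HA hA U _.
have Ss1 : ole oone (OS s) by apply: ole_trans s1 (oleSn s).
suff : Delta0 (OS s) (h @^-1` U) by case.
apply: (Delta0_agree_on (s := enum I) (A := A) Ss1) => [i _ | x x' xx'].
  split; first exact: Sigma0_le s1 (oleSn s) (HA i).
  exact: Sigma0_Pi0_lt s1 (ole_refl _) (HA i).
by rewrite /preimage /= (hA x x') // => i; apply: xx'; rewrite mem_enum.
Qed.

Section first_index_approximation.
Context {R : realType} {X Y : metricType R}.
Variables (f : X -> Y) (c : nat -> nat -> Y) (C : nat -> nat -> nat -> set X).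
Hypothesis cover : forall k x, exists q, (\bigcap_j C k q j) x.
Hypothesis close : forall k q x, (\bigcap_j C k q j) x -> mdist (c k q) (f x) < 2 ^- k.

Definition trunc_piece n k q := [set x | forall j, (j < n.+1)%N -> C k q j x].

Definition level_value n x k :=
  c k (find (fun q => `[< trunc_piece n k q x >]) (iota 0 n.+1)).

Definition first_index_approx n x := level_value n x (consistent_depth (level_value n x) n).

Lemma level_value_cvg x k : \forall n \near \oo, mdist (f x) (level_value n x k) < 2 ^- k.
Proof.
have in_trunc n q : (\bigcap_j C k q j) x -> `[< trunc_piece n k q x >].
  by move=> Pq; apply/asboolP => j _; apply: Pq.
have notin_trunc q : ~ (\bigcap_j C k q j) x ->
    \forall n \near \oo, ~~ `[< trunc_piece n k q x >].
  move=> /existsNP [j /not_implyP [_ nCj]]; near=> n; apply/negP => /asboolP Qx.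
  by apply/nCj/Qx; near: n; apply: nbhs_infty_ge.
have [q Pq fq] := find_iota_eventually (cover k x) in_trunc notin_trunc.
by apply: filterS fq => n fn; rewrite /level_value fn metric_sym; apply: close.
Unshelve. all: by end_near.
Qed.

Lemma first_index_approx_cvg x : first_index_approx ^~ x @ \oo --> f x.
Proof. exact: (cvg_consistent_depth (u := fun n => level_value n x) (level_value_cvg x)). Qed.

Lemma first_index_approx_agree n x x' :
  (forall k q, (k < n.+1)%N -> (q < n.+1)%N -> trunc_piece n k q x <-> trunc_piece n k q x') ->
  first_index_approx n x = first_index_approx n x'.
Proof.
move=> xx'; have level_eq k : (k < n.+1)%N -> level_value n x k = level_value n x' k.
  move=> kn; congr (c k _); apply: eq_in_find => q; rewrite mem_iota add0n => qn.
  by apply: asbool_equiv_eq; apply: xx'.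
rewrite /first_index_approx /consistent_depth (eq_in_find (a2 := fun k =>
    ~~ (mdist (level_value n x' k) (level_value n x' k.+1) < 2 ^- k + 2 ^- k.+1))).
  by rewrite level_eq // ltnS (leq_trans (find_size _ _)) ?size_iota.
by move=> k; rewrite mem_iota add0n => kn; rewrite !level_eq // ltnS // ltnW.
Qed.

End first_index_approximation.

Section lower_class.
Context {R : realType} {X Y : metricType R}.
Implicit Types (f : X -> Y) (e : nat -> Y).

Lemma Sigma0_measurable_lower_cvg t f e : olt oone t -> dense_seq e ->
  Sigma0_measurable (OS t) f ->
  exists g : nat -> X -> Y,
    (forall n, exists s, [/\ ole oone s, olt s t & Sigma0_measurable (OS s) (g n)]) /\
    forall x, g^~ x @ \oo --> f x.
Proof.
move=> t1 e_dense Hf.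
have /choice [Pc HPc] k : exists Pc : (nat -> set X) * (nat -> Y), [/\ forall q, Pi0 t (Pc.1 q),
    forall q x, Pc.1 q x -> mdist (Pc.2 q) (f x) < 2 ^- k & forall x, exists q, Pc.1 q x].
  have [P [c HPc]] := Pi0_cover (oltW t1) (dyadic_gt0 k) e_dense Hf.
  by exists (P, c).
have /choice [Cs HCs] (kq : nat * nat) : exists Cs : (nat -> set X) * (nat -> cord),
    (Pc kq.1).1 kq.2 = \bigcap_j Cs.1 j /\
    forall j, [/\ ole oone (Cs.2 j), olt (Cs.2 j) t & Sigma0 (Cs.2 j) (Cs.1 j)].
  have [PPi _ _] := HPc kq.1; have [C [s HC]] := Pi0_gt1_bigcap t1 (PPi kq.2).
  by exists (C, s).
pose c k := (Pc k).2; pose C k q := (Cs (k, q)).1.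
have PC k q : (Pc k).1 q = \bigcap_j C k q j by case: (HCs (k, q)).
exists (first_index_approx c C); split => [n | x]; last first.
  apply: first_index_approx_cvg => [k x' | k q x']; have [_ close cover] := HPc k.
    by have [q Pq] := cover x'; exists q; rewrite -PC.
  by rewrite -PC; apply: close.
pose rank (kqj : 'I_n.+1 * 'I_n.+1 * 'I_n.+1) := (Cs (kqj.1.1 : nat, kqj.1.2 : nat)).2 kqj.2.
have [s [s1 st rank_s]] : exists s, [/\ ole oone s, olt s t & forall i, ole (rank i) s].
  by apply: olt_ub_fin t1 _ => -[[k q] j]; have [? ? _] := (HCs (k : nat, q : nat)).2 j.
exists s; split => //.
apply: (Sigma0_measurable_finite_factor
  (A := fun kq : 'I_n.+1 * 'I_n.+1 => trunc_piece C n kq.1 kq.2) s1) => [[k q] | x x' xx'].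
  apply: (Sigma0_bigcap_lt s1) => j jn; have [r1 _ Cr] := (HCs (k : nat, q : nat)).2 j.
  exact: Sigma0_le r1 (rank_s (k, q, Ordinal jn)) Cr.
by apply: first_index_approx_agree => k q kn qn; apply: (xx' (Ordinal kn, Ordinal qn)).
Qed.

Lemma Sigma0_measurable_BaireClass t f e : dense_seq e -> ole oone t ->
  Sigma0_measurable (OS t) f -> BaireClass t f.
Proof.
move=> e_dense; elim/(well_founded_induction olt_wf): t f => t IH f t1 Hf.
case: (ge1_cases t1) => [t_eq1 | t_gt1].
  apply: (Baire_one t_eq1) => U /Hf.
  by apply: Sigma0_le (ole_SS t_eq1.1); apply: ole_trans t1 (oleSn t).
have [g [Hg gf]] := Sigma0_measurable_lower_cvg t_gt1 e_dense Hf.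
apply: (Baire_lim t_gt1 _ gf) => n; have [s [s1 st Hgn]] := Hg n.
by exists s; split => //; split => //; apply: IH.
Qed.

Lemma BaireClass_empty_domain t f : ole oone t -> (X -> False) -> BaireClass t f.
Proof.
move=> t1 X0; have preim0 (A : set Y) : f @^-1` A = set0.
  by rewrite -subset0 => x; case: (X0 x).
have f_Baire1 : BaireClass oone f.
  apply: Baire_one => [|U _]; first by split; apply: ole_refl.
  by rewrite preim0; apply/Sigma0_set0/oleSn.
case: (ge1_cases t1) => [t_eq1 | t_gt1].
  by apply: (Baire_one t_eq1) => U _; rewrite preim0; apply/Sigma0_set0/oleSn.
apply: (Baire_lim (g := fun=> f) t_gt1) => [n | x]; last by case: (X0 x).
by exists oone; split; [apply: ole_refl | split].
Qed.

End lower_class.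

Unset Implicit Arguments.
Theorem mainTheorem3 (R : realType) (X Y : metricType R) (xi : cord)
  (f : X -> Y) :
  separable_space Y -> ole oone xi ->
  (BaireClass xi f <->
   exists F : nat -> X -> Y,
     (forall n, Delta0_fun (OS xi) (F n)) /\ unif_limit F f).
Proof.
move=> sepY xi1.
have [[x0 _] | noX] := pselect (exists x : X, True); last first.
  have X0 (x : X) : False by apply: noX; exists x.
  have preim0 (A : set Y) : f @^-1` A = set0 by rewrite -subset0 => x; case: (X0 x).
  split => _; last exact: BaireClass_empty_domain.
  exists (fun=> f); split => [n A _ | r _]; last by exists 0%N => n _ x; case: (X0 x).
  by rewrite preim0; apply/Sigma0_set0/(ole_trans xi1 (oleSn xi)).
have [e e_dense] := separable_dense_seq (f x0) sepY.
split => [/(BaireClass_unif_Delta0 e_dense) // | [F [FD Ff]]].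
exact/(Sigma0_measurable_BaireClass e_dense xi1)/(unif_limit_Sigma0_measurable xi1 FD Ff).
Qed.
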